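(* Suppose the $L$-smoothness assumption holds and let $\{w_t\}$, $\{z_t\}$, $\{v_t\}$, $\{\hat D_t\}$ be generated by {\tt Scaled L-SVRG} with any step-size $\eta>0$. Then for every $t\ge0$, $$\mathbb{E}\left[\|v_t\|^2_{\hat D_t^{-1}}\right]\le3\,\mathbb{E}\left[\|\nabla P(w_t)\|^2_{\hat D_t^{-1}}\right]+\frac{6L^2}{\alpha}\mathbb{E}\left[\|w_t-z_t\|^2\right].$$
   Context: $P=\frac1n\sum_{i=1}^nf_i$ with $f_i:\mathbb{R}^d\to\mathbb{R}$. $L$-smoothness assumption: each $f_i$ and $P$ are twice differentiable with $L$-Lipschitz gradients. $\|x\|_D^2=x^TDx$. For $J\subseteq[n]$, $\nabla^2P_J(w)=\frac1{|J|}\sum_{j\in J}\nabla^2 f_j(w)$; $\odot$ is the Hadamard product; $\mathrm{diag}(x)$ is the diagonal matrix with the entries of $x$. Preconditioner (parameters $\alpha>0$, $\beta\in(0,1)$, $m\ge1$): $D_0=\frac1m\sum_{j=1}^m\mathrm{diag}(z'_j\odot\nabla^2P_{\mathcal{J}_j}(w_0)z'_j)$, $D_t=\beta D_{t-1}+(1-\beta)\mathrm{diag}(z'_t\odot\nabla^2P_{\mathcal{J}_t}(w_t)z'_t)$ for $t\ge1$, with independent Rademacher vectors $z'$ and random index sets $\mathcal{J}\subseteq[n]$, independent of the gradient samples; $\hat D_t$ diagonal with $(\hat D_t)_{ii}=\max\{\alpha,|(D_t)_{ii}|\}$. {\tt Scaled L-SVRG} (probability $p\in(0,1]$): $z_0=w_0$,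 $v_0=\nabla P(w_0)$; for $t\ge0$: $w_{t+1}=w_t-\eta\hat D_t^{-1}v_t$; $z_{t+1}=w_t$ with probability $p$ and $z_{t+1}=z_t$ with probability $1-p$; draw $i_{t+1}$ uniformly from $[n]$ independently; $v_{t+1}=\nabla f_{i_{t+1}}(w_{t+1})-\nabla f_{i_{t+1}}(z_{t+1})+\nabla P(z_{t+1})$; update $\hat D_{t+1}$. *)

From HB Require Import structures.
From mathcomp Require Import all_boot all_order all_algebra.
From mathcomp Require Import all_classical all_reals all_analysis.
Set Implicit Arguments. Unset Strict Implicit. Unset Printing Implicit Defensive.
Import Order.TTheory GRing.Theory Num.Theory.
Import numFieldNormedType.Exports.
Local Open Scope ring_scope.

Section ScaledLSVRG.
Variables (R : realType) (d n : nat).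

Definition vec := 'cV[R]_d.

Definition wnorm (D : 'M[R]_d) (x : vec) : R := ((x^T *m D *m x) 0 0).
Definition sqnorm (x : vec) : R := ((x^T *m x) 0 0).
Definition dotv (g h : vec) : R := ((g^T *m h) 0 0).

Definition is_grad_hess (f : vec -> R) (g : vec -> vec) (H : vec -> 'M[R]_d) :=
  forall x, differentiable f x /\ (forall h, 'd f x h = dotv (g x) h) /\
            differentiable g x /\ (forall h, 'd g x h = H x *m h).

Definition lipschitz_grad (L : R) (g : vec -> vec) :=
  forall x y, sqnorm (g x - g y) <= L ^+ 2 * sqnorm (x - y).

Definition Pavg (f : 'I_n -> vec -> R) (x : vec) : R :=
  n%:R^-1 * \sum_(i < n) f i x.
Definition gradP (g : 'I_n -> vec -> vec) (x : vec) : vec :=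
  n%:R^-1 *: \sum_(i < n) g i x.
Definition hessP (H : 'I_n -> vec -> 'M[R]_d) (x : vec) : 'M[R]_d :=
  n%:R^-1 *: \sum_(i < n) H i x.
Definition hessPJ (H : 'I_n -> vec -> 'M[R]_d) (J : {set 'I_n}) (x : vec)
  : 'M[R]_d := (#|J|%:R)^-1 *: \sum_(j in J) H j x.

Definition rad (b : {ffun 'I_d -> bool}) : vec :=
  \col_k (if b k then 1 else -1).

Definition hutch (A : 'M[R]_d) (z : vec) : 'M[R]_d :=
  diag_mx (\row_k (z k 0 * (A *m z) k 0)).

Definition Dhat (alpha : R) (D : 'M[R]_d) : 'M[R]_d :=
  diag_mx (\row_k (Num.max alpha `|D k k|)).

Record state := State { st_w : vec; st_z : vec; st_v : vec; st_D : 'M[R]_d }.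

(** Random outcome of one iteration t -> t+1:
    (coin for z_{t+1}, index i_{t+1}, Rademacher z'_{t+1}, index set J_{t+1}) *)
Definition step_out : finType :=
  (bool * 'I_n * {ffun 'I_d -> bool} * {set 'I_n})%type.
(** Random outcome of the initialization: the m pairs (z'_j, J_j) *)
Definition init_out (m : nat) : finType :=
  (m.-tuple ({ffun 'I_d -> bool} * {set 'I_n}))%type.

Variables (g : 'I_n -> vec -> vec) (H : 'I_n -> vec -> 'M[R]_d).
Variables (eta alpha beta : R) (m : nat) (w0 : vec).

Definition init_state (ini : init_out m) : state :=
  State w0 w0 (gradP g w0)
    (m%:R^-1 *: \sum_(x <- ini) hutch (hessPJ H x.2 w0) (rad x.1)).

Definition step (s : state) (o : step_out) : state :=
  let: (c, i, b, J) := o in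
  let w' := st_w s - eta *: (invmx (Dhat alpha (st_D s)) *m st_v s) in
  let z' := if c then st_w s else st_z s in
  let v' := g i w' - g i z' + gradP g z' in
  let D' := beta *: st_D s + (1 - beta) *: hutch (hessPJ H J w') (rad b) in
  State w' z' v' D'.

(** the state at time t = size os, given the random outcomes *)
Definition traj (ini : init_out m) (os : seq step_out) : state :=
  foldl step (init_state ini) os.

Variables (p : R) (q : {set 'I_n} -> R).

(** probability weights: coin ~ Bernoulli(p), i ~ Unif[n],
    z' ~ Unif{-1,1}^d, J ~ q *)
Definition rad_w : R := (2 ^ d)%:R^-1.
Definition init_w (ini : init_out m) : R :=
  \prod_(x <- ini) (rad_w * q x.2).
Definition step_w (o : step_out) : R :=
  let: (c, i, b, J) := o in
  (if c then p else 1 - p) * n%:R^-1 * rad_w * q J.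

Definition Exp (t : nat) (X : state -> R) : R :=
  \sum_(ini : init_out m) \sum_(os : t.-tuple step_out)
     (init_w ini * \prod_(o <- os) step_w o) * X (traj ini os).

End ScaledLSVRG.

From Pilot Require Import Defs.
From HB Require Import structures.
From mathcomp Require Import all_boot all_order all_algebra.
From mathcomp Require Import all_classical all_reals all_analysis.
From mathcomp Require Import ring lra.
Set Implicit Arguments. Unset Strict Implicit.
Import Order.TTheory GRing.Theory Num.Theory.
Import numFieldNormedType.Exports.
Local Open Scope ring_scope.

(* The bound holds pathwise, so it survives taking expectations. At every time
   t >= 1 the estimator is v = grad P(w) + (g_i w - g_i z) + (grad P z - grad P w)
   for the index i just drawn (and v = grad P(w) at t = 0, where z = w). The
   scaling hat D^-1 is diagonal with entries in (0, 1/alpha], so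
   (a + b + c)^2 <= 3 (a^2 + b^2 + c^2) coordinatewise gives
   |v|^2_{D^-1} <= 3 |grad P w|^2_{D^-1} + (3/alpha) (|b|^2 + |c|^2), and both
   |b|^2 and |c|^2 are at most L^2 |w - z|^2 by L-smoothness of f_i and P. *)

Lemma sqr_add3_le (R : realDomainType) (a b c : R) :
  (a + b + c) ^+ 2 <= 3 * (a ^+ 2 + b ^+ 2 + c ^+ 2).
Proof.
have : 0 <= (a - b) ^+ 2 + (a - c) ^+ 2 + (b - c) ^+ 2 by rewrite !addr_ge0 ?sqr_ge0.
by rewrite !expr2; nra.
Qed.

Section DiagonalNorms.
Variables (R : realType) (d : nat).
Implicit Types (c : 'rV[R]_d) (x y z : vec R d).

Lemma wnorm_diag c x : wnorm (diag_mx c) x = \sum_k c 0 k * x k 0 ^+ 2.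
Proof.
rewrite /wnorm mxE; apply: eq_bigr => k _.
by rewrite mul_mx_diag !mxE mulrAC -expr2 mulrC.
Qed.

Lemma sqnorm_sum x : sqnorm x = \sum_k x k 0 ^+ 2.
Proof. by rewrite /sqnorm mxE; apply: eq_bigr => k _; rewrite !mxE expr2. Qed.

Lemma sqnormN x : sqnorm (- x) = sqnorm x.
Proof. by rewrite !sqnorm_sum; apply: eq_bigr => k _; rewrite mxE sqrrN. Qed.

Lemma wnorm_diag_add3_le c x y z : (forall k, 0 <= c 0 k) ->
  wnorm (diag_mx c) (x + y + z)
  <= 3 * (wnorm (diag_mx c) x + wnorm (diag_mx c) y + wnorm (diag_mx c) z).
Proof.
move=> c_ge0; rewrite !wnorm_diag -!big_split mulr_sumr /=; apply: ler_sum => k _.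
rewrite !mxE -!mulrDr [leRHS]mulrCA; apply: ler_wpM2l => //; exact: sqr_add3_le.
Qed.

Lemma wnorm_diag_le_sqnorm c (K : R) x : (forall k, c 0 k <= K) ->
  wnorm (diag_mx c) x <= K * sqnorm x.
Proof.
move=> c_leK; rewrite wnorm_diag sqnorm_sum mulr_sumr; apply: ler_sum => k _.
by apply: ler_wpM2r; rewrite ?sqr_ge0.
Qed.

Lemma invmx_Dhat (alpha : R) (D : 'M[R]_d) : 0 < alpha ->
  invmx (Dhat alpha D) = diag_mx (\row_k (Num.max alpha `|D k k|)^-1).
Proof.
move=> alpha_gt0.
have Dhat_mulV : Dhat alpha D *m diag_mx (\row_k (Num.max alpha `|D k k|)^-1) = 1%:M.
  rewrite /Dhat mulmx_diag -diag_const_mx; congr diag_mx.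
  by apply/matrixP => i j; rewrite !mxE mulfV // gt_eqF // lt_max alpha_gt0.
have [Dhat_unit _] := mulmx1_unit Dhat_mulV.
by rewrite -[RHS]mul1mx -(mulVmx Dhat_unit) -mulmxA Dhat_mulV mulmx1.
Qed.

Lemma Dhat_inv_entry_bounds (alpha : R) (D : 'M[R]_d) k : 0 < alpha ->
  0 < (Num.max alpha `|D k k|)^-1 <= alpha^-1.
Proof.
move=> alpha_gt0; have max_gt0 : 0 < Num.max alpha `|D k k| by rewrite lt_max alpha_gt0.
by rewrite invr_gt0 max_gt0 lef_pV2 ?le_max ?lexx.
Qed.

Lemma svrg_estimator_wnorm_le (L alpha : R) (D : 'M[R]_d) (gi gP : vec R d -> vec R d)
    (w z : vec R d) :
  0 < alpha -> lipschitz_grad L gi -> lipschitz_grad L gP ->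
  wnorm (invmx (Dhat alpha D)) (gi w - gi z + gP z)
  <= 3 * wnorm (invmx (Dhat alpha D)) (gP w) + 6 * L ^+ 2 / alpha * sqnorm (w - z).
Proof.
move=> alpha_gt0 Lip_gi Lip_gP; rewrite invmx_Dhat //.
set c := \row_k _.
have c_bounds k : 0 < c 0 k <= alpha^-1 by rewrite mxE Dhat_inv_entry_bounds.
have c_ge0 k : 0 <= c 0 k by case/andP: (c_bounds k) => /ltW.
have c_le k : c 0 k <= alpha^-1 by case/andP: (c_bounds k).
have -> : gi w - gi z + gP z = gP w + (gi w - gi z) + (gP z - gP w).
  by rewrite [RHS]addrAC [gP w + _]addrC subrK [RHS]addrC.
apply: le_trans (wnorm_diag_add3_le _ _ _ c_ge0) _.
have ia_ge0 : 0 <= alpha^-1 by rewrite invr_ge0 ltW.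
have Wb_le : wnorm (diag_mx c) (gi w - gi z) <= alpha^-1 * (L ^+ 2 * sqnorm (w - z)).
  exact: le_trans (wnorm_diag_le_sqnorm _ c_le) (ler_wpM2l ia_ge0 (Lip_gi w z)).
have Wc_le : wnorm (diag_mx c) (gP z - gP w) <= alpha^-1 * (L ^+ 2 * sqnorm (w - z)).
  have := Lip_gP z w; rewrite -[z - w]opprB sqnormN => Lip_zw.
  exact: le_trans (wnorm_diag_le_sqnorm _ c_le) (ler_wpM2l ia_ge0 Lip_zw).
have -> : 6 * L ^+ 2 / alpha * sqnorm (w - z)
          = 3 * (alpha^-1 * (L ^+ 2 * sqnorm (w - z))) * 2 by ring.
lra.
Qed.

End DiagonalNorms.

Section Expectation.
Variables (R : realType) (d n : nat).
Variables (g : 'I_n -> vec R d -> vec R d) (H : 'I_n -> vec R d -> 'M[R]_d).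
Variables (eta alpha beta : R) (m : nat) (w0 : vec R d).
Variables (p : R) (q : {set 'I_n} -> R).
Hypotheses (p_ge0 : 0 <= p) (p_le1 : p <= 1) (q_ge0 : forall J, 0 <= q J).

Local Notation traj := (traj g H eta alpha beta (m:=m) w0).
Local Notation Exp := (Exp g H eta alpha beta m w0 p q).

Lemma rad_w_ge0 : 0 <= rad_w R d.
Proof. by rewrite invr_ge0. Qed.

Lemma init_w_ge0 (ini : init_out d n m) : 0 <= init_w q ini.
Proof. by apply: prodr_ge0 => x _; rewrite mulr_ge0 ?rad_w_ge0. Qed.

Lemma step_w_ge0 (o : step_out d n) : 0 <= step_w p q o.
Proof.
case: o => [[[c i] b] J] /=.
by rewrite !mulr_ge0 ?rad_w_ge0 ?invr_ge0 //; case: c; rewrite ?subr_ge0.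
Qed.

Lemma ExpD t (X Y : state R d -> R) :
  Exp t (fun s => X s + Y s) = Exp t X + Exp t Y.
Proof.
rewrite /Exp -big_split; apply: eq_bigr => ini _.
by rewrite -big_split; apply: eq_bigr => os _; rewrite mulrDr.
Qed.

Lemma ExpZ t (a : R) (X : state R d -> R) :
  Exp t (fun s => a * X s) = a * Exp t X.
Proof.
rewrite /Exp mulr_sumr; apply: eq_bigr => ini _.
by rewrite mulr_sumr; apply: eq_bigr => os _; rewrite mulrCA.
Qed.

Lemma ler_Exp t (X Y : state R d -> R) :
  (forall ini (os : t.-tuple (step_out d n)), X (traj ini os) <= Y (traj ini os)) ->
  Exp t X <= Exp t Y.
Proof.
move=> le_XY; apply: ler_sum => ini _; apply: ler_sum => os _.
apply: ler_wpM2l; last exact: le_XY.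
by rewrite mulr_ge0 ?init_w_ge0 //; apply: prodr_ge0 => o _; exact: step_w_ge0.
Qed.

(* At t = 0 the estimator is grad P(w0) and z0 = w0, so any index works. *)
Lemma traj_st_v (n_gt0 : (0 < n)%N) ini os :
  let s := traj ini os in
  exists i, st_v s = g i (st_w s) - g i (st_z s) + gradP g (st_z s).
Proof.
rewrite /Defs.traj; case/lastP: os => [|os [[[c i] b] J]].
  by exists (Ordinal n_gt0); rewrite /= subrr add0r.
by rewrite foldl_rcons; exists i.
Qed.

End Expectation.

Theorem lemma6 (R : realType) (d n : nat) (hn : (0 < n)%N)
  (f : 'I_n -> vec R d -> R) (g : 'I_n -> vec R d -> vec R d)
  (H : 'I_n -> vec R d -> 'M[R]_d) (L : R) (hL : 0 <= L)
  (hfi : forall i, is_grad_hess (f i) (g i) (H i))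
  (hLi : forall i, lipschitz_grad L (g i))
  (hP : is_grad_hess (Pavg f) (gradP g) (hessP H))
  (hLP : lipschitz_grad L (gradP g))
  (alpha beta eta p : R) (m : nat) (w0 : vec R d)
  (halpha : 0 < alpha) (hbeta0 : 0 < beta) (hbeta1 : beta < 1)
  (hm : (0 < m)%N) (hp0 : 0 < p) (hp1 : p <= 1) (heta : 0 < eta)
  (q : {set 'I_n} -> R) (hq0 : forall J, 0 <= q J)
  (hq1 : \sum_(J : {set 'I_n}) q J = 1)
  (t : nat) :
  let E := Exp g H eta alpha beta m w0 p q t in
  E (fun s => wnorm (invmx (Dhat alpha (st_D s))) (st_v s))
  <= 3 * E (fun s => wnorm (invmx (Dhat alpha (st_D s))) (gradP g (st_w s)))
     + 6 * L ^+ 2 / alpha * E (fun s => sqnorm (st_w s - st_z s)).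
Proof.
cbv zeta; rewrite -!ExpZ -ExpD.
apply: (ler_Exp (ltW hp0) hp1 hq0) => ini os.
have [i ->] := traj_st_v g H eta alpha beta w0 hn ini os.
exact: svrg_estimator_wnorm_le.
Qed.
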